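(* For $k\geq 2$ let $S=\{0,1\}\cup\{2^{2^i}:1\leq i\leq k-1\}$ and $a=2^{2^k}$, and define on $(0,1]$ $$W=\frac{1}{g_S\,g_{\{a\}}}\left(\frac{g_{\{a\}}'\,g_S-g_S'\,g_{\{a\}}}{g_S+g_{\{a\}}}\right)^2 .$$ Then there is a constant $c>0$ (independent of $k$) such that for all sufficiently large $k$, $$\int_{1-\frac{1}{2a}}^{1}\sqrt{W(t)}\,\mathrm{d}t\geq\frac{c}{\sqrt{k}}.$$
   Context: $\mathbb{N}=\{0,1,2,\dots\}$. For a finite set $S\subseteq\mathbb{N}$ define $g_S(t)=\sum_{e\in S}t^{2e}$; in particular $g_{\{a\}}(t)=t^{2a}$. *)

From Stdlib Require Import Reals List.
Import ListNotations.
Open Scope R_scope.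

(* A finite set S of naturals, given as a duplicate-free list of exponents. *)
Definition gS (S : list nat) (t : R) : R :=
  fold_right (fun e acc => t ^ (2 * e) + acc) 0 S.

(* Its derivative g_S'(t) = sum_{e in S} (2e) t^(2e-1)  (formal derivative of
   the polynomial g_S). *)
Definition gS' (S : list nat) (t : R) : R :=
  fold_right (fun e acc => INR (2 * e) * t ^ (2 * e - 1) + acc) 0 S.

Definition Sk (k : nat) : list nat :=
  0%nat :: 1%nat :: map (fun i => Nat.pow 2 (Nat.pow 2 i)) (seq 1 (k - 1)).

Definition ak (k : nat) : nat := Nat.pow 2 (Nat.pow 2 k).

Definition W (k : nat) (t : R) : R :=
  let S := Sk k in
  let A := [ak k] in
  / (gS S t * gS A t) *
  ((gS' A t * gS S t - gS' S t * gS A t) / (gS S t + gS A t)) ^ 2.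

(* Near t = 1 the function g_{a} = t^(2a) is about 1 while its derivative is
   about 2a, whereas g_S and g_S' are of size k and 2^(2^(k-1)) k = sqrt(a) k.
   Hence the Wronskian g_a' g_S - g_S' g_a is of order a k, and W is of order
   a^2 / k on the whole interval [1 - 1/(2a), 1]; integrating sqrt W over this
   interval of length 1/(2a) gives a bound of order 1/sqrt k. *)

From Stdlib Require Import Reals List Lra Lia.
Import ListNotations.
Open Scope R_scope.

Lemma pow_unit_interval t n : 0 <= t <= 1 -> 0 <= t ^ n <= 1.
Proof.
  intros Ht; split; [apply pow_le; lra|].
  rewrite <- (pow1 n); apply pow_incr; lra.
Qed.

Lemma pow_le_pow_of_le_1 t m n : 0 <= t <= 1 -> (m <= n)%nat -> t ^ n <= t ^ m.
Proof.
  intros Ht Hmn; replace n with (m + (n - m))%nat by lia; rewrite pow_add.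
  pose proof (pow_unit_interval t m Ht); pose proof (pow_unit_interval t (n - m) Ht).
  nra.
Qed.

Lemma bernoulli_ineq y n : y <= 1 -> 1 - INR n * y <= (1 - y) ^ n.
Proof.
  intros Hy; induction n as [|n IH]; [simpl; lra|].
  rewrite S_INR; simpl.
  assert ((1 - y) * (1 - INR n * y) <= (1 - y) * (1 - y) ^ n)
    by (apply Rmult_le_compat_l; lra).
  assert (0 <= INR n * (y * y)) by (apply Rmult_le_pos; [apply pos_INR | nra]).
  nra.
Qed.

Lemma pow_ge_half_near_1 n t : 1 <= INR n -> 1 - / (2 * INR n) <= t <= 1 -> 1 / 2 <= t ^ n.
Proof.
  intros Hn Ht.
  assert (Hinv : / (2 * INR n) <= / 2) by (apply Rinv_le_contravar; lra).
  pose proof (bernoulli_ineq (1 - t) n ltac:(lra)) as Hbern.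
  replace (1 - (1 - t)) with t in Hbern by ring.
  assert (INR n * (1 - t) <= INR n * / (2 * INR n)) by (apply Rmult_le_compat_l; lra).
  replace (INR n * / (2 * INR n)) with (1 / 2) in * by (field; lra).
  lra.
Qed.

Lemma RiemannInt_ge_const f a b l (pr : Riemann_integrable f a b) :
  a <= b -> (forall x, a < x < b -> l <= f x) -> l * (b - a) <= RiemannInt pr.
Proof.
  intros Hab Hl; rewrite <- (RiemannInt_P15 (RiemannInt_P14 a b l)).
  apply RiemannInt_P19; [exact Hab | exact Hl].
Qed.

Lemma gS_nonneg S t : 0 <= t -> 0 <= gS S t.
Proof.
  intros Ht; induction S as [|e S IH]; unfold gS in *; cbn [fold_right]; [lra|].
  pose proof (pow_le t (2 * e) Ht); lra.
Qed.

Lemma gS_ge S t m :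
  (forall e, In e S -> m <= t ^ (2 * e)) -> m * INR (length S) <= gS S t.
Proof.
  induction S as [|e S IH]; intros Hm; [simpl; lra|].
  cbn [length]; rewrite S_INR.
  assert (m <= t ^ (2 * e)) by (apply Hm; left; reflexivity).
  assert (m * INR (length S) <= gS S t) by (apply IH; intros; apply Hm; right; assumption).
  unfold gS in *; cbn [fold_right]; lra.
Qed.

Lemma gS_le S t : 0 <= t <= 1 -> gS S t <= INR (length S).
Proof.
  intros Ht; induction S as [|e S IH]; [simpl; lra|].
  cbn [length]; rewrite S_INR.
  pose proof (pow_unit_interval t (2 * e) Ht); unfold gS in *; cbn [fold_right]; lra.
Qed.

Lemma gS'_bounds S t B : 0 <= t <= 1 -> (forall e, In e S -> INR e <= B) ->
  0 <= gS' S t <= 2 * B * INR (length S).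
Proof.
  intros Ht; induction S as [|e S IH]; intros HB; [simpl; lra|].
  cbn [length]; rewrite S_INR.
  assert (INR e <= B) by (apply HB; left; reflexivity).
  assert (0 <= gS' S t <= 2 * B * INR (length S))
    by (apply IH; intros; apply HB; right; assumption).
  pose proof (pow_unit_interval t (2 * e - 1) Ht); pose proof (pos_INR e).
  unfold gS' in *; cbn [fold_right]; rewrite mult_INR; simpl (INR 2); split; nra.
Qed.

Lemma gS_singleton e t : gS [e] t = t ^ (2 * e).
Proof. unfold gS; cbn [fold_right]; ring. Qed.

Lemma gS'_singleton e t : gS' [e] t = 2 * INR e * t ^ (2 * e - 1).
Proof. unfold gS'; cbn [fold_right]; rewrite mult_INR; simpl (INR 2); ring. Qed.

Lemma continuity_gS S : continuity (gS S).
Proof.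
  induction S as [|e S IH]; simpl.
  - apply continuity_const; intros ??; reflexivity.
  - apply (continuity_plus (fun t => t ^ (2 * e)) (gS S)); [|exact IH].
    apply derivable_continuous; reg.
Qed.

Lemma continuity_gS' S : continuity (gS' S).
Proof.
  induction S as [|e S IH]; simpl.
  - apply continuity_const; intros ??; reflexivity.
  - apply (continuity_plus (fun t => INR (2 * e) * t ^ (2 * e - 1)) (gS' S)); [|exact IH].
    apply derivable_continuous; reg.
Qed.

Lemma Sk_length k : (1 <= k)%nat -> length (Sk k) = S k.
Proof. intros Hk; unfold Sk; cbn [length]; rewrite length_map, length_seq; lia. Qed.

Lemma Sk_le j e : In e (Sk (S j)) -> (e <= 2 ^ (2 ^ j))%nat.
Proof.
  unfold Sk; replace (S j - 1)%nat with j by lia.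
  assert (1 <= 2 ^ (2 ^ j))%nat by (apply Nat.pow_le_mono_r with (a := 2%nat) (b := 0%nat); lia).
  intros [He|[He|He]]; try lia.
  apply in_map_iff in He as [i [<- Hi]]; apply in_seq in Hi.
  apply Nat.pow_le_mono_r; [lia|]; apply Nat.pow_le_mono_r; lia.
Qed.

Lemma ak_S j : ak (S j) = (2 ^ (2 ^ j) * 2 ^ (2 ^ j))%nat.
Proof. unfold ak; rewrite Nat.pow_succ_r', <- Nat.pow_add_r; f_equal; lia. Qed.

Lemma ak_ge_1 k : 1 <= INR (ak k).
Proof.
  apply (le_INR 1); unfold ak.
  apply Nat.pow_le_mono_r with (a := 2%nat) (b := 0%nat); lia.
Qed.

Lemma gS_Sk_pos k t : 0 <= t -> 0 < gS (Sk k) t.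
Proof.
  intros Ht; unfold Sk.
  match goal with |- 0 < gS (_ :: ?T) t => pose proof (gS_nonneg T t Ht) end.
  unfold gS in *; cbn [fold_right] in *; rewrite Nat.mul_0_r, pow_O; lra.
Qed.

Lemma gS_Sk_ge j t : 0 <= t <= 1 ->
  t ^ (2 * ak (S j)) * INR (S (S j)) <= gS (Sk (S j)) t.
Proof.
  intros Ht; rewrite <- (Sk_length (S j)) by lia; apply gS_ge; intros e He.
  apply pow_le_pow_of_le_1; [exact Ht|]; apply Sk_le in He; rewrite ak_S; nia.
Qed.

Definition wronskian_ratio (g h g' h' : R) : R :=
  / (g * h) * ((h' * g - g' * h) / (g + h)) ^ 2.

Lemma W_wronskian_ratio k t :
  W k t = wronskian_ratio (gS (Sk k) t) (gS [ak k] t) (gS' (Sk k) t) (gS' [ak k] t).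
Proof. reflexivity. Qed.

Lemma wronskian_ratio_nonneg g h g' h' : 0 < g -> 0 < h -> 0 <= wronskian_ratio g h g' h'.
Proof.
  intros Hg Hh; unfold wronskian_ratio.
  apply Rmult_le_pos; [apply Rlt_le, Rinv_0_lt_compat; nra | apply pow2_ge_0].
Qed.

Lemma wronskian_ratio_ge A g h g' h' :
  0 < h <= g -> 0 <= A -> A * h * g <= h' * g - g' * h ->
  A ^ 2 * h / (4 * g) <= wronskian_ratio g h g' h'.
Proof.
  intros Hh HA HN; unfold wronskian_ratio.
  set (N := h' * g - g' * h) in *.
  replace (/ (g * h) * (N / (g + h)) ^ 2) with (N ^ 2 / (g * h * (g + h) ^ 2)) by (field; lra).
  assert (HN2 : (A * h * g) ^ 2 <= N ^ 2)
    by (apply pow_incr; split; [apply Rmult_le_pos; nra | exact HN]).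
  assert (Hsum : (g + h) ^ 2 <= 4 * g ^ 2) by nra.
  apply (Rmult_le_reg_r (4 * g * (g * h * (g + h) ^ 2))).
  { assert (0 < g * h) by nra; assert (0 < (g + h) ^ 2) by nra.
    repeat apply Rmult_lt_0_compat; lra. }
  replace (A ^ 2 * h / (4 * g) * (4 * g * (g * h * (g + h) ^ 2)))
    with (A ^ 2 * h ^ 2 * g * (g + h) ^ 2) by (field; lra).
  replace (N ^ 2 / (g * h * (g + h) ^ 2) * (4 * g * (g * h * (g + h) ^ 2)))
    with (4 * g * N ^ 2) by (field; lra).
  assert (0 <= A ^ 2 * h ^ 2 * g) by (apply Rmult_le_pos; nra).
  apply Rle_trans with (A ^ 2 * h ^ 2 * g * (4 * g ^ 2)).
  - apply Rmult_le_compat_l; assumption.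
  - replace (A ^ 2 * h ^ 2 * g * (4 * g ^ 2)) with (4 * g * (A * h * g) ^ 2) by ring.
    apply Rmult_le_compat_l; lra.
Qed.

Lemma wronskian_ratio_ge_near_1 b n g h g' h' :
  8 <= b -> 4 <= n -> n / 4 <= g <= n -> 0 <= g' <= 2 * b * n ->
  1 / 4 <= h <= 1 -> 2 * b ^ 2 * h <= h' ->
  (b ^ 2) ^ 2 / (16 * n) <= wronskian_ratio g h g' h'.
Proof.
  intros Hb Hn Hg Hg' Hh Hh'.
  eapply Rle_trans; [|apply wronskian_ratio_ge with (A := b ^ 2); [lra | apply pow2_ge_0 |]].
  - unfold Rdiv; rewrite Rmult_assoc; apply Rmult_le_compat_l; [apply pow2_ge_0|].
    replace (/ (16 * n)) with (/ 4 * / (4 * n)) by (field; lra).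
    apply Rmult_le_compat; [lra | apply Rlt_le, Rinv_0_lt_compat; lra | lra |].
    apply Rinv_le_contravar; lra.
  - assert (Hbg : 2 * b * n <= b ^ 2 * g) by nra.
    assert (g' * h <= b ^ 2 * g * h) by (apply Rmult_le_compat_r; lra).
    assert (2 * b ^ 2 * h * g <= h' * g) by (apply Rmult_le_compat_r; lra).
    lra.
Qed.

Lemma continuity_pt_wronskian_ratio (g h g' h' : R -> R) x :
  continuity g -> continuity h -> continuity g' -> continuity h' ->
  0 < g x -> 0 < h x ->
  continuity_pt (fun t => wronskian_ratio (g t) (h t) (g' t) (h' t)) x.
Proof.
  intros cg ch cg' ch' gx hx; unfold wronskian_ratio.
  apply (continuity_pt_mult (fun t => / (g t * h t))
           (fun t => ((h' t * g t - g' t * h t) / (g t + h t)) ^ 2)).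
  - apply (continuity_pt_inv (fun t => g t * h t)); [|nra].
    apply (continuity_pt_mult g h); auto.
  - apply (continuity_pt_comp (fun t => (h' t * g t - g' t * h t) / (g t + h t))
             (fun y => y ^ 2)); [|apply derivable_continuous_pt; reg].
    apply (continuity_pt_div (fun t => h' t * g t - g' t * h t) (fun t => g t + h t)); [| |lra].
    + apply (continuity_pt_minus (fun t => h' t * g t) (fun t => g' t * h t));
        [apply (continuity_pt_mult h' g) | apply (continuity_pt_mult g' h)]; auto.
    + apply (continuity_pt_plus g h); auto.
Qed.

Lemma Riemann_integrable_sqrt_W k :
  Riemann_integrable (fun t => sqrt (W k t)) (1 - / (2 * INR (ak k))) 1.
Proof.
  pose proof (ak_ge_1 k).
  assert (0 < / (2 * INR (ak k)) <= / 2)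
    by (split; [apply Rinv_0_lt_compat | apply Rinv_le_contravar]; lra).
  apply continuity_implies_RiemannInt; [lra|]; intros t Ht.
  assert (Hg : 0 < gS (Sk k) t) by (apply gS_Sk_pos; lra).
  assert (Ha : 0 < gS [ak k] t) by (rewrite gS_singleton; apply pow_lt; lra).
  apply (continuity_pt_comp (W k) sqrt).
  - apply continuity_pt_wronskian_ratio; auto using continuity_gS, continuity_gS'.
  - apply continuity_pt_sqrt; rewrite W_wronskian_ratio; apply wronskian_ratio_nonneg; auto.
Qed.

Lemma W_ge k t : (3 <= k)%nat -> 1 - / (2 * INR (ak k)) <= t <= 1 ->
  INR (ak k) ^ 2 / (64 * INR k) <= W k t.
Proof.
  intros Hk Ht; destruct k as [|j]; [lia|].
  set (b := INR (2 ^ (2 ^ j))).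
  assert (Hab : INR (ak (S j)) = b ^ 2) by (rewrite ak_S, mult_INR; unfold b; ring).
  assert (Hb : 16 <= b).
  { replace 16 with (INR (2 ^ (2 ^ 2))) by (simpl; lra); apply le_INR.
    apply Nat.pow_le_mono_r; [lia|]; apply Nat.pow_le_mono_r; lia. }
  set (n := INR (S (S j))).
  assert (Hn : n = INR j + 2) by (unfold n; rewrite !S_INR; ring).
  assert (Hj : 2 <= INR j) by (pose proof (le_INR 2 j ltac:(lia)) as H2; simpl in H2; lra).
  assert (t01 : 0 <= t <= 1).
  { pose proof (ak_ge_1 (S j)).
    assert (/ (2 * INR (ak (S j))) <= / 2) by (apply Rinv_le_contravar; lra).
    lra. }
  set (x := t ^ (2 * ak (S j))).
  assert (Hx : 1 / 4 <= x <= 1).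
  { pose proof (pow_ge_half_near_1 _ t (ak_ge_1 (S j)) Ht).
    pose proof (pow_unit_interval t (ak (S j)) t01).
    unfold x; rewrite Nat.mul_comm, pow_mult; simpl; nra. }
  pose proof (gS_Sk_ge j t t01) as HG; fold x n in HG.
  assert (Hlen : INR (length (Sk (S j))) = n) by (rewrite Sk_length by lia; reflexivity).
  rewrite W_wronskian_ratio, gS_singleton, gS'_singleton; fold x.
  apply Rle_trans with ((b ^ 2) ^ 2 / (16 * n)).
  { rewrite Hab; unfold Rdiv; apply Rmult_le_compat_l; [apply pow2_ge_0|].
    apply Rinv_le_contravar; [lra | rewrite S_INR; lra]. }
  apply wronskian_ratio_ge_near_1; [lra | lra | split | | exact Hx |].
  - nra.
  - rewrite <- Hlen; apply gS_le, t01.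
  - rewrite <- Hlen; apply gS'_bounds; [exact t01|].
    intros e He; apply le_INR, Sk_le, He.
  - rewrite Hab; apply Rmult_le_compat_l; [nra|].
    apply pow_le_pow_of_le_1; [exact t01 | lia].
Qed.

Theorem lemma6p3 :
  exists c : R, 0 < c /\
  exists K : nat, forall k : nat, (2 <= k)%nat -> (K <= k)%nat ->
    exists pr : Riemann_integrable (fun t => sqrt (W k t))
                  (1 - / (2 * INR (ak k))) 1,
      RiemannInt pr >= c / sqrt (INR k).
Proof.
  exists (1 / 16); split; [lra|]; exists 3%nat; intros k _ Hk.
  exists (Riemann_integrable_sqrt_W k).
  set (a := INR (ak k)); pose proof (ak_ge_1 k) as Ha; fold a in Ha.
  assert (Hk0 : 0 < INR k) by (apply lt_0_INR; lia).
  assert (Hsk : 0 < sqrt (INR k)) by (apply sqrt_lt_R0, Hk0).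
  assert (Hlo : 1 - / (2 * a) <= 1) by (pose proof (Rinv_0_lt_compat (2 * a)); lra).
  assert (Hbound : forall t, 1 - / (2 * a) < t < 1 -> a / (8 * sqrt (INR k)) <= sqrt (W k t)).
  { intros t Ht.
    replace (a / (8 * sqrt (INR k))) with (sqrt (a ^ 2 / (64 * INR k))).
    - apply sqrt_le_1_alt, W_ge; [exact Hk | unfold a in Ht; lra].
    - rewrite sqrt_div_alt, sqrt_pow2, sqrt_mult_alt by lra.
      replace 64 with (8 * 8) by ring; rewrite sqrt_square; lra. }
  pose proof (RiemannInt_ge_const _ _ _ _ (Riemann_integrable_sqrt_W k) Hlo Hbound) as Hint.
  replace (1 / 16 / sqrt (INR k)) with (a / (8 * sqrt (INR k)) * (1 - (1 - / (2 * a))))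
    by (field; lra).
  exact (Rle_ge _ _ Hint).
Qed.
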